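(* Every finitely generated group is poly-ccc; that is, every finitely generated group $G$ admits a sequence of fair polytilings $(P_n)_{n\in\mathbb{N}}$ that is centered, cofinal, and coherent.
   Context: For a countable group $G$, a tuple $(T_1,\dots,T_k)$ of finite subsets of $G$, each containing $1_G$, is a polytile if there are non-empty sets $\Delta_1,\dots,\Delta_k\subseteq G$ with $G$ the disjoint union $\coprod_{1\le i\le k,\ \delta\in\Delta_i}\delta T_i$; then $P=(\Delta_1,\dots,\Delta_k;T_1,\dots,T_k)$ is a polytiling, and this partition of $G$ is the partition induced by $P$. The polytiling is fair if $|T_1|=\dots=|T_k|$. A sequence $P_n=(\Delta^n_1,\dots,\Delta^n_{k(n)};T^n_1,\dots,T^n_{k(n)})$ of polytilings is coherent if for each $n$ the partition induced by $P_n$ is finer than that induced by $P_{n+1}$; centered if $1_G\in\Delta_1^n$ for all $n$; cofinal if $T_1^n\subseteq T_1^{n+1}$ for all $n$ and $G=\bigcup_n T_1^n$. $G$ is poly-ccc if it admits a centered, cofinal, coherent sequence of fair polytilings. *)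

From Stdlib Require Import List.
Import ListNotations.
Set Implicit Arguments.

Record group := Group {
  carrier :> Type;
  gmul : carrier -> carrier -> carrier;
  gone : carrier;
  ginv : carrier -> carrier;
  gmulA : forall x y z, gmul x (gmul y z) = gmul (gmul x y) z;
  gmul1l : forall x, gmul gone x = x;
  gmul1r : forall x, gmul x gone = x;
  gmulVl : forall x, gmul (ginv x) x = gone;
  gmulVr : forall x, gmul x (ginv x) = gone
}.

Section Defs.
Variable G : group.

Definition finitely_generated : Prop :=
  exists S : list G,
    forall H : G -> Prop,
      H (gone G) ->
      (forall s, In s S -> H s) ->
      (forall x y, H x -> H y -> H (gmul G x y)) ->
      (forall x, H x -> H (ginv G x)) ->
      forall g, H g.

(* A tile-with-centers: a set of centers Delta_i and a finite set T_i,
   the latter represented as a duplicate-free list. *)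
Definition tile := ((G -> Prop) * list G)%type.

Definition in_translate (d : G) (T : list G) (g : G) : Prop :=
  exists t, In t T /\ g = gmul G d t.

(* P = (Delta_1,...,Delta_k; T_1,...,T_k) (as the list [(Delta_1,T_1);...])
   is a polytiling: k >= 1, each T_i a finite set containing 1, each Delta_i
   non-empty, and G is the disjoint union of the sets delta T_i indexed by
   (i, delta) with delta in Delta_i. *)
Definition is_polytiling (P : list tile) : Prop :=
  P <> [] /\
  (forall i D T, nth_error P i = Some (D, T) ->
     NoDup T /\ In (gone G) T /\ exists d, D d) /\
  (forall g : G, exists! id : nat * G,
     exists D T, nth_error P (fst id) = Some (D, T) /\ D (snd id) /\
                 in_translate (snd id) T g).

Definition fair (P : list tile) : Prop :=
  forall i j D T D' T', nth_error P i = Some (D, T) -> nth_error P j = Some (D', T') ->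
    length T = length T'.

Definition finer (P Q : list tile) : Prop :=
  forall i D T d, nth_error P i = Some (D, T) -> D d ->
    exists j D' T' d', nth_error Q j = Some (D', T') /\ D' d' /\
      forall g, in_translate d T g -> in_translate d' T' g.

Definition first_centers (P : list tile) : G -> Prop :=
  match P with (D, _) :: _ => D | [] => fun _ => False end.

Definition first_tile (P : list tile) : list G :=
  match P with (_, T) :: _ => T | [] => [] end.

Definition coherent (P : nat -> list tile) : Prop :=
  forall n, finer (P n) (P (S n)).

Definition centered (P : nat -> list tile) : Prop :=
  forall n, first_centers (P n) (gone G).

Definition cofinal (P : nat -> list tile) : Prop :=
  (forall n, incl (first_tile (P n)) (first_tile (P (S n)))) /\
  (forall g : G, exists n, In g (first_tile (P n))).

Definition poly_ccc : Prop :=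
  exists P : nat -> list tile,
    (forall n, is_polytiling (P n) /\ fair (P n)) /\
    centered P /\ cofinal P /\ coherent P.

End Defs.

(* A partition of G into blocks of a common size, each with a center at bounded word distance
   from its elements and the block of 1 centered at 1, yields a fair polytiling: the tiles are
   the shapes c^-1 B of the blocks B, finitely many since they lie in a ball.  Starting from
   singletons, merge the blocks in pairs at bounded distance, pairing the block of 1 with a
   prescribed block t.  Such a pairing exists because the block-adjacency graph (with t
   contracted into 1) is infinite, connected and locally finite, and in such a graph all
   vertices but the root can be paired at distance at most 2: in a breadth-first spanning tree,
   pair each vertex with its children whose subtree is finite of odd size or infinite, using the
   parity of finite subtrees.  Iterating absorbs every ball into the block of 1, which gives
   coherence and cofinality; a finite group is a single block. *)

From Stdlib Require Import List Arith Lia Bool.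
From Stdlib Require Import Classical ClassicalEpsilon FunctionalExtensionality PropExtensionality.
Import ListNotations.

Definition asbool (P : Prop) : bool := if excluded_middle_informative P then true else false.

Lemma asboolT P : asbool P = true <-> P.
Proof. unfold asbool; destruct excluded_middle_informative; split; auto; discriminate. Qed.

Lemma asboolF P : asbool P = false <-> ~ P.
Proof.
  unfold asbool; destruct excluded_middle_informative; split; auto; try discriminate; contradiction.
Qed.

Lemma ex_least_nat (P : nat -> Prop) : (exists n, P n) -> exists n, P n /\ forall m, P m -> n <= m.
Proof.
  intros [n Hn]; induction n as [n IH] using lt_wf_ind.
  destruct (classic (exists m, m < n /\ P m)) as [[m [Hmn Hm]]|Hnone].
  - exact (IH m Hmn Hm).
  - exists n; split; [exact Hn|]. intros m Hm.
    destruct (le_lt_dec n m); [assumption|]. exfalso; eauto.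
Qed.

Lemma list_pair_ind (X : Type) (P : list X -> Prop) :
  P [] -> (forall x, P [x]) -> (forall x y r, P r -> P (x :: y :: r)) -> forall l, P l.
Proof.
  intros H0 H1 H2. fix IH 1. intros [|x [|y r]]; [exact H0|apply H1|apply H2, IH].
Qed.

Section BreadthFirstTree.
Variables (X : Type) (nb : X -> list X) (root : X).

Definition eqX (x y : X) : {x = y} + {x <> y} := excluded_middle_informative (x = y).

Fixpoint within (n : nat) (y : X) : Prop :=
  match n with
  | 0 => y = root
  | S m => within m y \/ exists x, within m x /\ In y (nb x)
  end.

Definition reach (y : X) : Prop := exists n, within n y.

Definition depth (y : X) : nat :=
  match excluded_middle_informative (reach y) with
  | left H => proj1_sig (constructive_indefinite_description _ (ex_least_nat _ H))
  | right _ => 0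
  end.

Lemma depth_spec y : reach y -> within (depth y) y /\ forall m, within m y -> depth y <= m.
Proof.
  intros H; unfold depth; destruct excluded_middle_informative as [H'|]; [|contradiction].
  destruct constructive_indefinite_description as [n Hn]; exact Hn.
Qed.

Lemma reach_root : reach root.
Proof. now exists 0. Qed.

Lemma depth_root : depth root = 0.
Proof. destruct (depth_spec root reach_root) as [_ H]. specialize (H 0 eq_refl); lia. Qed.

Lemma depth0 y : reach y -> depth y = 0 -> y = root.
Proof. intros H H0. destruct (depth_spec y H) as [Hy _]. now rewrite H0 in Hy. Qed.

Lemma reach_nb x y : reach x -> In y (nb x) -> reach y /\ depth y <= S (depth x).
Proof.
  intros Hx Hy. destruct (depth_spec x Hx) as [Hwx _].
  assert (Hwy : within (S (depth x)) y) by (simpl; eauto).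
  assert (Ry : reach y) by (exists (S (depth x)); exact Hwy).
  split; [exact Ry|]. exact (proj2 (depth_spec y Ry) _ Hwy).
Qed.

Lemma ex_parent y : reach y -> y <> root -> exists x, within (depth y - 1) x /\ In y (nb x).
Proof.
  intros H Hr. destruct (depth_spec y H) as [Hw Hmin].
  destruct (depth y) as [|k]; simpl in Hw; [contradiction|].
  destruct Hw as [Hw|Hw]; [specialize (Hmin _ Hw); lia|].
  now replace (S k - 1) with k by lia.
Qed.

Definition parent (y : X) : X :=
  match excluded_middle_informative (reach y /\ y <> root) with
  | left H => proj1_sig (constructive_indefinite_description _ (ex_parent y (proj1 H) (proj2 H)))
  | right _ => root
  end.

Lemma parent_spec y : reach y -> y <> root ->
  reach (parent y) /\ In y (nb (parent y)) /\ depth y = S (depth (parent y)).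
Proof.
  intros H Hr. unfold parent. destruct excluded_middle_informative as [H'|]; [|tauto].
  destruct constructive_indefinite_description as [x [Hx Hyx]]; simpl.
  assert (Rx : reach x) by (eexists; eauto).
  destruct (reach_nb x y Rx Hyx) as [_ Hle].
  destruct (depth_spec x Rx) as [_ Hmin]. specialize (Hmin _ Hx).
  assert (depth y <> 0) by (intro E; apply Hr, depth0; auto).
  repeat split; auto; lia.
Qed.

Definition ancestor (k : nat) (u : X) : X := Nat.iter k parent u.

Lemma ancestor_spec u k : reach u -> k <= depth u ->
  reach (ancestor k u) /\ depth (ancestor k u) = depth u - k.
Proof.
  intros Hu. induction k as [|k IH]; intros Hk; [simpl; split; auto; lia|].
  destruct IH as [Ha Hd]; [lia|].
  assert (ancestor k u <> root) by (intro E; rewrite E, depth_root in Hd; lia).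
  destruct (parent_spec _ Ha H) as [Hp [_ Hdp]].
  change (ancestor (S k) u) with (parent (ancestor k u)). split; auto; lia.
Qed.

Definition desc (v u : X) : Prop :=
  reach u /\ depth v <= depth u /\ ancestor (depth u - depth v) u = v.

Definition children (v : X) : list X :=
  nodup eqX (filter (fun c => asbool (reach c /\ c <> root /\ parent c = v)) (nb v)).

Lemma in_children v c : In c (children v) <-> In c (nb v) /\ reach c /\ c <> root /\ parent c = v.
Proof. unfold children. rewrite nodup_In, filter_In, asboolT. tauto. Qed.

Lemma children_NoDup v : NoDup (children v).
Proof. apply NoDup_nodup. Qed.

Lemma child_spec v c : In c (children v) ->
  reach c /\ c <> root /\ parent c = v /\ reach v /\ depth c = S (depth v).
Proof.
  intros H. apply in_children in H as [_ [Hc [Hr Hp]]].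
  destruct (parent_spec c Hc Hr) as [? [_ ?]]. subst v. auto.
Qed.

Lemma child_neq v c : In c (children v) -> c <> v.
Proof. intros H ->. apply child_spec in H. lia. Qed.

Lemma child_of_parent v : reach v -> v <> root -> In v (children (parent v)).
Proof. intros H Hr. destruct (parent_spec v H Hr) as [? [? _]]. now apply in_children. Qed.

Lemma desc_refl v : reach v -> desc v v.
Proof. intros H. repeat split; auto. now rewrite Nat.sub_diag. Qed.

Lemma desc_root u : reach u -> desc root u.
Proof.
  intros H. unfold desc. rewrite depth_root, Nat.sub_0_r. repeat split; auto; [lia|].
  destruct (ancestor_spec u (depth u) H) as [Ha Hd]; [lia|].
  apply depth0; [exact Ha|lia].
Qed.

Lemma desc_through_child v u : desc v u -> u <> v -> exists c, In c (children v) /\ desc c u.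
Proof.
  intros [Hu [Hd Ha]] Hne.
  remember (depth u - depth v) as k eqn:Ek.
  destruct k as [|k]; [contradiction|].
  destruct (ancestor_spec u k Hu) as [Hak Hdk]; [lia|].
  assert (Hr : ancestor k u <> root) by (intro E; rewrite E, depth_root in Hdk; lia).
  destruct (parent_spec _ Hak Hr) as [_ [Hnb _]].
  exists (ancestor k u). split.
  - apply in_children. rewrite <- Ha. auto.
  - repeat split; auto; [lia|]. now replace (depth u - depth (ancestor k u)) with k by lia.
Qed.

Lemma desc_of_child v c u : In c (children v) -> desc c u -> desc v u.
Proof.
  intros Hc [Hu [Hd Ha]]. apply child_spec in Hc as [_ [_ [Hp [_ Hdc]]]].
  repeat split; auto; [lia|].
  replace (depth u - depth v) with (S (depth u - depth c)) by lia.
  change (parent (ancestor (depth u - depth c) u) = v). now rewrite Ha.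
Qed.

Lemma desc_child_unique v c c' u :
  In c (children v) -> In c' (children v) -> desc c u -> desc c' u -> c = c'.
Proof.
  intros H H' [_ [_ A]] [_ [_ A']]. apply child_spec in H. apply child_spec in H'.
  replace (depth c') with (depth c) in A' by lia. congruence.
Qed.

Lemma desc_child_neq v c u : In c (children v) -> desc c u -> u <> v.
Proof. intros H [_ [Hd _]] ->. apply child_spec in H. lia. Qed.

Definition finite_below (v : X) : Prop := exists L, forall u, desc v u -> In u L.

Lemma finite_below_child v c : In c (children v) -> finite_below v -> finite_below c.
Proof. intros H [L HL]. exists L. eauto using desc_of_child. Qed.

Lemma finite_below_children v :
  (forall c, In c (children v) -> finite_below c) -> reach v -> finite_below v.
Proof.
  intros Hc Hv.
  assert (Hcov : forall l, (forall c, In c l -> finite_below c) ->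
            exists L, forall c u, In c l -> desc c u -> In u L).
  { induction l as [|a l IH]; intros Hl; [exists []; intros c u []|].
    destruct IH as [L HL]; [intros; apply Hl; simpl; auto|].
    destruct (Hl a (or_introl eq_refl)) as [La HLa].
    exists (La ++ L). intros c u [<-|Hin] Hd; apply in_or_app; eauto. }
  destruct (Hcov (children v) Hc) as [L HL].
  exists (v :: L). intros u Hu. destruct (eqX u v) as [->|Hne]; [now left|right].
  destruct (desc_through_child v u Hu Hne) as [c [Hc' Hd]]. eauto.
Qed.

Lemma konig_infinite_child v : reach v -> ~ finite_below v ->
  exists c, In c (children v) /\ ~ finite_below c.
Proof.
  intros Hv Hinf. apply NNPP. intro Hno. apply Hinf, finite_below_children; [|exact Hv].
  intros c Hc. apply NNPP. eauto.
Qed.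

Definition subtree (v : X) : list X :=
  match excluded_middle_informative (finite_below v) with
  | left H => nodup eqX (filter (fun u => asbool (desc v u))
                                (proj1_sig (constructive_indefinite_description _ H)))
  | right _ => []
  end.

Lemma subtree_spec v :
  finite_below v -> NoDup (subtree v) /\ forall u, In u (subtree v) <-> desc v u.
Proof.
  intros H. unfold subtree. destruct excluded_middle_informative as [H'|]; [|contradiction].
  destruct constructive_indefinite_description as [L HL]; simpl.
  split; [apply NoDup_nodup|]. intros u. rewrite nodup_In, filter_In, asboolT. firstorder.
Qed.

Lemma NoDup_flat_map_disjoint (f : X -> list X) (l : list X) :
  NoDup l -> (forall x, In x l -> NoDup (f x)) ->
  (forall x y z, In x l -> In y l -> In z (f x) -> In z (f y) -> x = y) ->
  NoDup (flat_map f l).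
Proof.
  induction l as [|a l IH]; intros Hl Hf Hdisj; simpl; [constructor|].
  apply NoDup_cons_iff in Hl as [Ha Hl]. apply NoDup_app.
  - apply Hf; now left.
  - apply IH; auto; [intros; apply Hf|intros; eapply Hdisj]; simpl; eauto.
  - intros z Hz Hz'. apply in_flat_map in Hz' as [y [Hy Hzy]].
    assert (a = y) by (eapply Hdisj; simpl; eauto). now subst.
Qed.

Lemma subtree_length v : reach v -> finite_below v ->
  length (subtree v) = S (list_sum (map (fun c => length (subtree c)) (children v))).
Proof.
  intros Hv Hfin.
  assert (Hfc : forall c, In c (children v) -> finite_below c) by eauto using finite_below_child.
  set (l := v :: flat_map subtree (children v)).
  assert (Hl : NoDup l).
  { constructor.
    - intro H. apply in_flat_map in H as [c [Hc Hvc]].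
      apply (subtree_spec c (Hfc c Hc)) in Hvc. exact (desc_child_neq v c v Hc Hvc eq_refl).
    - apply NoDup_flat_map_disjoint; [apply children_NoDup|intros x Hx; apply subtree_spec; auto|].
      intros x y z Hx Hy Hzx Hzy.
      apply (subtree_spec _ (Hfc _ Hx)) in Hzx. apply (subtree_spec _ (Hfc _ Hy)) in Hzy.
      exact (desc_child_unique v x y z Hx Hy Hzx Hzy). }
  destruct (subtree_spec v Hfin) as [Hnd Hsub].
  assert (Heq : forall u, In u l <-> In u (subtree v)).
  { intros u. rewrite Hsub. simpl. split.
    - intros [<-|H]; [now apply desc_refl|].
      apply in_flat_map in H as [c [Hc Hu]].
      apply (subtree_spec _ (Hfc _ Hc)) in Hu. eauto using desc_of_child.
    - intros H. destruct (eqX v u) as [|Hne]; [now left|right].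
      destruct (desc_through_child v u H (not_eq_sym Hne)) as [c [Hc Hd]].
      apply in_flat_map. exists c. split; [exact Hc|]. now apply (subtree_spec _ (Hfc _ Hc)). }
  transitivity (length l).
  - apply Nat.le_antisymm; apply NoDup_incl_length; auto; intros u; apply Heq.
  - simpl. now rewrite length_flat_map.
Qed.

Definition odd_below (v : X) : bool := Nat.odd (length (subtree v)).

Definition odd_children (h : X) : list X :=
  filter (fun c => asbool (finite_below c) && odd_below c) (children h).

Definition infinite_children (h : X) : list X :=
  filter (fun c => negb (asbool (finite_below c))) (children h).

Lemma in_odd_children c h :
  In c (odd_children h) <-> In c (children h) /\ finite_below c /\ odd_below c = true.
Proof. unfold odd_children. rewrite filter_In, andb_true_iff, asboolT. tauto. Qed.

Lemma in_infinite_children c h :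
  In c (infinite_children h) <-> In c (children h) /\ ~ finite_below c.
Proof. unfold infinite_children. rewrite filter_In, negb_true_iff, asboolF. tauto. Qed.

Lemma odd_below_parity v : reach v -> finite_below v ->
  odd_below v = Nat.even (length (odd_children v)).
Proof.
  intros Hv Hfin. unfold odd_below. rewrite subtree_length by assumption.
  rewrite Nat.odd_succ. unfold odd_children.
  assert (Hfc : forall c, In c (children v) -> finite_below c) by eauto using finite_below_child.
  induction (children v) as [|a l IH]; [reflexivity|]. simpl.
  rewrite (proj2 (asboolT _) (Hfc a (or_introl eq_refl))), Nat.even_add, IH
    by (intros; apply Hfc; now right).
  assert (Ha : Nat.even (length (subtree a)) = negb (odd_below a))
    by (unfold odd_below; now rewrite <- Nat.negb_even, negb_involutive).
  rewrite Ha. simpl andb.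
  destruct (odd_below a), (Nat.even (length _)) eqn:E; cbn [length negb andb Bool.eqb];
    rewrite ?Nat.even_succ, <- ?Nat.negb_even, ?E; reflexivity.
Qed.

Lemma infinite_children_nonempty h : reach h -> ~ finite_below h -> infinite_children h <> [].
Proof.
  intros Hh Hinf E. destruct (konig_infinite_child h Hh Hinf) as [c [Hc Hcinf]].
  assert (Hin : In c (infinite_children h)) by now apply in_infinite_children.
  now rewrite E in Hin.
Qed.

Fixpoint partner (l : list X) (v : X) : option X :=
  match l with
  | x :: y :: r => if eqX v x then Some y else if eqX v y then Some x else partner r v
  | _ => None
  end.

Lemma partner_sym l v u : NoDup l -> partner l v = Some u ->
  In v l /\ In u l /\ u <> v /\ partner l u = Some v.
Proof.
  revert v u. induction l as [|x|x y r IH] using list_pair_ind; intros v u Hnd Hp;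
    simpl in Hp; try discriminate.
  apply NoDup_cons_iff in Hnd as [Hx Hnd]. apply NoDup_cons_iff in Hnd as [Hy Hnd].
  assert (Hxy : x <> y) by (intros ->; apply Hx; now left).
  simpl. destruct (eqX v x) as [->|Hvx]; [|destruct (eqX v y) as [->|Hvy]].
  - injection Hp as <-. repeat split; auto.
    destruct (eqX y x); [congruence|]. now destruct (eqX y y).
  - injection Hp as <-. repeat split; auto. now destruct (eqX x x).
  - destruct (IH v u Hnd Hp) as [Hv [Hu [Hne Hpu]]]. repeat split; auto.
    destruct (eqX u x) as [->|]; [exfalso; apply Hx; now right|].
    destruct (eqX u y) as [->|]; [contradiction|exact Hpu].
Qed.

Lemma partner_none l v : NoDup l -> In v l -> partner l v = None ->
  exists l', l = l' ++ [v] /\ Nat.even (length l') = true.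
Proof.
  induction l as [|x|x y r IH] using list_pair_ind; intros Hnd Hv Hp; simpl in Hp.
  - destruct Hv.
  - destruct Hv as [<-|[]]. now exists [].
  - destruct (eqX v x); [discriminate|]. destruct (eqX v y); [discriminate|].
    apply NoDup_cons_iff in Hnd as [_ Hnd]. apply NoDup_cons_iff in Hnd as [_ Hnd].
    destruct Hv as [<-|[<-|Hv]]; try contradiction.
    destruct (IH Hnd Hv Hp) as [l' [-> He]]. now exists (x :: y :: l').
Qed.

Lemma partner_last l x :
  NoDup (l ++ [x]) -> Nat.even (length l) = true -> partner (l ++ [x]) x = None.
Proof.
  induction l as [|a|a b r IH] using list_pair_ind; intros Hnd He; simpl in *; try easy.
  apply NoDup_cons_iff in Hnd as [Ha Hnd]. apply NoDup_cons_iff in Hnd as [Hb Hnd].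
  destruct (eqX x a) as [->|]; [exfalso; apply Ha; right; apply in_or_app; now right; left|].
  destruct (eqX x b) as [->|]; [exfalso; apply Hb; apply in_or_app; now right; left|].
  now apply IH.
Qed.

Lemma in_last_block (l' a b : list X) v : l' ++ [v] = a ++ b -> b <> [] -> In v b.
Proof.
  intros H Hb. destruct (exists_last Hb) as [b' [y ->]].
  rewrite app_assoc in H. apply app_inj_tail in H as [_ ->]. apply in_or_app; now right; left.
Qed.

(* The vertices paired up at an [h] with infinite subtree: [h] itself when [b] says it is
   still unmatched, the children whose finite subtree has odd size (the child is the one vertex
   left over inside that subtree) and the children with an infinite subtree. *)
Definition infinite_cluster (b : bool) (h : X) : list X :=
  (if b then [h] else []) ++ odd_children h ++ infinite_children h.

(* [unmatched u]: [u] has an infinite subtree and is left over by the cluster of its parent. *)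
Fixpoint unmatched_at (n : nat) (u : X) : bool :=
  match n with
  | 0 => false
  | S m =>
      match partner (infinite_cluster (unmatched_at m (parent u)) (parent u)) u with
      | None => true
      | Some _ => false
      end
  end.

Definition unmatched (u : X) : bool := unmatched_at (depth u) u.

Lemma unmatched_root : unmatched root = false.
Proof. unfold unmatched. now rewrite depth_root. Qed.

Lemma unmatched_eq u : reach u -> u <> root ->
  unmatched u = match partner (infinite_cluster (unmatched (parent u)) (parent u)) u with
                | None => true | Some _ => false end.
Proof.
  intros Hu Hr. destruct (parent_spec u Hu Hr) as [_ [_ E]]. unfold unmatched at 1. now rewrite E.
Qed.

(* For a finite subtree [h] comes last, so it is left over iff its subtree has odd size. *)
Definition cluster (h : X) : list X :=
  if asbool (finite_below h) then odd_children h ++ [h] else infinite_cluster (unmatched h) h.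

(* The vertex whose cluster contains [v]. *)
Definition home (v : X) : X :=
  if asbool (finite_below v) then (if odd_below v then parent v else v)
  else (if unmatched v then v else parent v).

Definition pairing (v : X) : X :=
  match partner (cluster (home v)) v with Some u => u | None => v end.

Lemma in_cluster h u : In u (cluster h) ->
  (u = h /\ (finite_below h \/ unmatched h = true)) \/ In u (children h).
Proof.
  unfold cluster, infinite_cluster. destruct (asbool (finite_below h)) eqn:E; intros H.
  - rewrite asboolT in E.
    apply in_app_or in H as [H|[<-|[]]]; [|left; split; [reflexivity|now left]].
    right. apply in_odd_children in H; tauto.
  - apply in_app_or in H as [H|H].
    + destruct (unmatched h) eqn:U; [|destruct H].
      destruct H as [<-|[]]. left; split; [reflexivity|now right].
    + right. apply in_app_or in H as [H|H];
        [apply in_odd_children in H; tauto|apply in_infinite_children in H; tauto].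
Qed.

Lemma cluster_NoDup h : NoDup (cluster h).
Proof.
  assert (N1 : NoDup (odd_children h)) by apply NoDup_filter, children_NoDup.
  assert (N2 : NoDup (infinite_children h)) by apply NoDup_filter, children_NoDup.
  assert (Hh : ~ In h (odd_children h ++ infinite_children h)).
  { intros H. apply in_app_or in H as [H|H];
      [apply in_odd_children in H|apply in_infinite_children in H];
      exact (child_neq h h (proj1 H) eq_refl). }
  unfold cluster, infinite_cluster. destruct (asbool (finite_below h)).
  - apply NoDup_app; auto; [repeat constructor; auto|].
    intros a H1 [<-|[]]. apply Hh, in_or_app; now left.
  - assert (NoDup (odd_children h ++ infinite_children h)).
    { apply NoDup_app; auto. intros a H1 H2.
      apply in_odd_children in H1. apply in_infinite_children in H2. tauto. }
    destruct (unmatched h); simpl; auto. now constructor.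
Qed.

Lemma child_in_cluster h c : In c (children h) -> In c (cluster h) ->
  (finite_below c /\ odd_below c = true) \/ ~ finite_below c.
Proof.
  intros Hc Hin. pose proof (child_neq h c Hc) as Hne.
  unfold cluster, infinite_cluster in Hin. destruct (asbool (finite_below h)).
  - apply in_app_or in Hin as [Hin|[E|[]]]; [|congruence].
    left. apply in_odd_children in Hin. tauto.
  - apply in_app_or in Hin as [Hin|Hin].
    + destruct (unmatched h); [destruct Hin as [E|[]]; congruence|destruct Hin].
    + apply in_app_or in Hin as [Hin|Hin];
        [left; apply in_odd_children in Hin|right; apply in_infinite_children in Hin]; tauto.
Qed.

Lemma home_of_cluster_member h u :
  reach h -> In u (cluster h) -> partner (cluster h) u <> None -> home u = h.
Proof.
  intros Hh Hu Hp. destruct (in_cluster h u Hu) as [[<- _]|Hc].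
  - pose proof (cluster_NoDup u) as Hnd.
    unfold cluster, home in *. destruct (asbool (finite_below u)) eqn:F.
    + rewrite asboolT in F. destruct (odd_below u) eqn:O; [|reflexivity].
      exfalso. apply Hp, partner_last; [exact Hnd|].
      now rewrite <- (odd_below_parity u Hh F).
    + destruct (unmatched u) eqn:U; [reflexivity|].
      exfalso. unfold infinite_cluster in Hu; simpl in Hu. apply in_app_or in Hu as [Hu|Hu];
        [apply in_odd_children in Hu|apply in_infinite_children in Hu];
        exact (child_neq u u (proj1 Hu) eq_refl).
  - destruct (child_spec h u Hc) as [Hur [Hr [Hpar _]]]. unfold home.
    destruct (child_in_cluster h u Hc Hu) as [[Hfin Hodd]|Hinf].
    + now rewrite (proj2 (asboolT _) Hfin), Hodd.
    + rewrite (proj2 (asboolF _) Hinf), (unmatched_eq u Hur Hr), Hpar.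
      assert (Hhinf : ~ finite_below h) by (intro HF; apply Hinf; eauto using finite_below_child).
      unfold cluster in Hp. rewrite (proj2 (asboolF _) Hhinf) in Hp.
      now destruct (partner (infinite_cluster (unmatched h) h) u).
Qed.

Hypothesis reach_infinite : forall L, exists v, reach v /\ ~ In v L.

Lemma root_infinite : ~ finite_below root.
Proof.
  intros [L HL]. destruct (reach_infinite L) as [v [Hv Hn]]. exact (Hn (HL v (desc_root v Hv))).
Qed.

Lemma cluster_last_infinite h l v :
  reach h -> ~ finite_below h -> cluster h = l ++ [v] -> In v (infinite_children h).
Proof.
  intros Hh Hinf E. unfold cluster, infinite_cluster in E.
  rewrite (proj2 (asboolF _) Hinf), app_assoc in E.
  symmetry in E. exact (in_last_block _ _ _ _ E (infinite_children_nonempty h Hh Hinf)).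
Qed.

Lemma partner_exists v : reach v -> v <> root -> exists u, partner (cluster (home v)) v = Some u.
Proof.
  intros Hv Hr.
  destruct (partner (cluster (home v)) v) as [u|] eqn:E; [eauto|exfalso].
  pose proof (child_of_parent v Hv Hr) as Hc.
  destruct (parent_spec v Hv Hr) as [Hpr _].
  unfold home in E. destruct (asbool (finite_below v)) eqn:F.
  - rewrite asboolT in F. destruct (odd_below v) eqn:O.
    + assert (Hin : In v (cluster (parent v))).
      { unfold cluster, infinite_cluster. destruct (asbool (finite_below (parent v)));
          apply in_or_app; [left|right; apply in_or_app; left]; now apply in_odd_children. }
      destruct (partner_none _ _ (cluster_NoDup _) Hin E) as [l [El _]].
      destruct (asbool (finite_below (parent v))) eqn:F2.
      * unfold cluster in El. rewrite F2 in El. apply app_inj_tail in El as [_ El].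
        exact (child_neq _ _ Hc (eq_sym El)).
      * rewrite asboolF in F2. apply cluster_last_infinite in El; [|assumption..].
        apply in_infinite_children in El. tauto.
    + assert (Hg : cluster v = odd_children v ++ [v])
        by (unfold cluster; now rewrite (proj2 (asboolT _) F)).
      assert (Hnd : NoDup (odd_children v ++ [v])) by (rewrite <- Hg; apply cluster_NoDup).
      assert (Hin : In v (odd_children v ++ [v])) by (apply in_or_app; now right; left).
      rewrite Hg in E. destruct (partner_none _ _ Hnd Hin E) as [l [El Ev]].
      apply app_inj_tail in El as [<- _].
      now rewrite (odd_below_parity v Hv F), Ev in O.
  - rewrite asboolF in F. destruct (unmatched v) eqn:U.
    + assert (Hin : In v (cluster v)).
      { unfold cluster, infinite_cluster. rewrite (proj2 (asboolF _) F), U. now left. }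
      destruct (partner_none _ _ (cluster_NoDup _) Hin E) as [l [El _]].
      apply cluster_last_infinite in El; [|assumption..].
      apply in_infinite_children in El. exact (child_neq v v (proj1 El) eq_refl).
    + rewrite (unmatched_eq v Hv Hr) in U.
      assert (Hpinf : ~ finite_below (parent v))
        by (intro HF; apply F; eauto using finite_below_child).
      unfold cluster in E. rewrite (proj2 (asboolF _) Hpinf) in E. now rewrite E in U.
Qed.

Lemma home_reach v : reach v -> v <> root -> reach (home v).
Proof.
  intros Hv Hr. destruct (parent_spec v Hv Hr) as [Hp _].
  unfold home.
  destruct (asbool (finite_below v)); [destruct (odd_below v)|destruct (unmatched v)]; auto.
Qed.

Lemma in_cluster_near h u : In u (cluster h) -> u = h \/ In u (nb h).
Proof.
  intros H. destruct (in_cluster h u H) as [[-> _]|Hc]; [now left|].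
  right. apply in_children in Hc. tauto.
Qed.

Theorem pairing_spec v : reach v -> v <> root ->
  reach (pairing v) /\ pairing v <> root /\ pairing v <> v /\ pairing (pairing v) = v /\
  exists h, reach h /\ (v = h \/ In v (nb h)) /\ (pairing v = h \/ In (pairing v) (nb h)).
Proof.
  intros Hv Hr.
  destruct (partner_exists v Hv Hr) as [u Hu].
  pose proof (home_reach v Hv Hr) as Hh.
  destruct (partner_sym _ _ _ (cluster_NoDup _) Hu) as [Hvg [Hug [Hne Huv]]].
  assert (Hhome : home u = home v) by (apply home_of_cluster_member; auto; congruence).
  assert (Pv : pairing v = u) by (unfold pairing; now rewrite Hu).
  assert (Pu : pairing u = v) by (unfold pairing; now rewrite Hhome, Huv).
  rewrite Pv, Pu.
  assert (Hur : reach u /\ u <> root).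
  { destruct (in_cluster _ _ Hug) as [[-> [Hfin|Hun]]|Hc]; [split; auto..|].
    - intros E. rewrite E in Hfin. exact (root_infinite Hfin).
    - intros E. rewrite E, unmatched_root in Hun. discriminate.
    - apply child_spec in Hc. tauto. }
  destruct Hur as [Hur Hur']. repeat split; auto.
  exists (home v). repeat split; auto; apply in_cluster_near; assumption.
Qed.

End BreadthFirstTree.

Section Blockings.
Variable G : group.
Local Notation "x ** y" := (gmul G x y) (at level 40, left associativity).
Local Notation one := (gone G).
Local Notation inv := (ginv G).

Definition eqG (x y : G) : {x = y} + {x <> y} := excluded_middle_informative (x = y).

Lemma mulKl (x y : G) : inv x ** (x ** y) = y.
Proof. now rewrite gmulA, gmulVl, gmul1l. Qed.

Lemma mulKr (x y : G) : x ** (inv x ** y) = y.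
Proof. now rewrite gmulA, gmulVr, gmul1l. Qed.

Lemma inv_unique (a b : G) : a ** b = one -> b = inv a.
Proof. intros H. now rewrite <- (mulKl a b), H, gmul1r. Qed.

Lemma invK (x : G) : inv (inv x) = x.
Proof. symmetry. apply inv_unique, gmulVl. Qed.

Lemma invM (x y : G) : inv (x ** y) = inv y ** inv x.
Proof. symmetry. apply inv_unique. now rewrite <- gmulA, mulKr, gmulVr. Qed.

Lemma inv1 : inv one = one.
Proof. symmetry. apply inv_unique, gmul1l. Qed.

Definition word_prod (l : list G) : G := fold_right (gmul G) one l.

Lemma word_prod_app l1 l2 : word_prod (l1 ++ l2) = word_prod l1 ** word_prod l2.
Proof. induction l1 as [|a l IH]; simpl; [now rewrite gmul1l|now rewrite IH, gmulA]. Qed.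

Lemma word_prod_rev_inv l : word_prod (rev (map inv l)) = inv (word_prod l).
Proof.
  induction l as [|a l IH]; simpl; [now rewrite inv1|].
  now rewrite word_prod_app, IH; simpl; rewrite gmul1r, invM.
Qed.

Variable Sg : list G.
Hypothesis Sg_sym : forall s, In s Sg -> In (inv s) Sg.

Definition in_ball (r : nat) (g : G) : Prop :=
  exists l, incl l Sg /\ length l <= r /\ word_prod l = g.

Lemma in_ball_one r : in_ball r one.
Proof. exists []. repeat split; [intros x []|simpl; lia]. Qed.

Lemma in_ball_mono r r' g : r <= r' -> in_ball r g -> in_ball r' g.
Proof. intros H [l [A [B C]]]. exists l. repeat split; auto; lia. Qed.

Lemma in_ball_mul r r' a b : in_ball r a -> in_ball r' b -> in_ball (r + r') (a ** b).
Proof.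
  intros [l [A [B <-]]] [l' [A' [B' <-]]]. exists (l ++ l'). repeat split.
  - intros x H. apply in_app_or in H as [H|H]; auto.
  - rewrite length_app. lia.
  - apply word_prod_app.
Qed.

Lemma in_ball_inv r a : in_ball r a -> in_ball r (inv a).
Proof.
  intros [l [A [B <-]]]. exists (rev (map inv l)). repeat split.
  - intros x H. apply in_rev, in_map_iff in H as [s [<- H]]. auto.
  - now rewrite length_rev, length_map.
  - apply word_prod_rev_inv.
Qed.

Lemma in_ball_gen s : In s Sg -> in_ball 1 s.
Proof.
  intros H. exists [s]. split; [intros x [<-|[]]; exact H|split; [simpl; lia|apply gmul1r]].
Qed.

Fixpoint words (r : nat) : list (list G) :=
  match r with
  | 0 => [[]]
  | S r => words r ++ flat_map (fun s => map (cons s) (words r)) Sg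
  end.

Lemma in_words r l : In l (words r) <-> incl l Sg /\ length l <= r.
Proof.
  revert l. induction r as [|r IH]; intros l; simpl.
  - split; [intros [<-|[]]; split; [intros x []|simpl; lia]|].
    intros [_ H]. destruct l; simpl in H; [now left|lia].
  - rewrite in_app_iff, in_flat_map, IH. split.
    + intros [[A B]|[s [Hs Hl]]]; [split; auto; lia|].
      apply in_map_iff in Hl as [l' [<- Hl']]. apply IH in Hl' as [A B].
      split; [intros x [<-|H]; auto|simpl; lia].
    + intros [A B]. destruct l as [|s l']; [left; split; auto; simpl; lia|].
      right. exists s. split; [apply A; now left|]. apply in_map, IH.
      split; [intros x H; apply A; now right|simpl in B; lia].
Qed.

Definition ball (r : nat) : list G := nodup eqG (map word_prod (words r)).

Lemma in_ball_list r g : In g (ball r) <-> in_ball r g.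
Proof.
  unfold ball. rewrite nodup_In, in_map_iff. split.
  - intros [l [<- H]]. apply in_words in H as [A B]. now exists l.
  - intros [l [A [B <-]]]. exists l. split; auto. now apply in_words.
Qed.

Fixpoint sublists (l : list G) : list (list G) :=
  match l with
  | [] => [[]]
  | x :: l => map (cons x) (sublists l) ++ sublists l
  end.

Lemma filter_in_sublists f l : In (filter f l) (sublists l).
Proof.
  induction l as [|a l IH]; simpl; [now left|].
  destruct (f a); apply in_or_app; [left; now apply in_map|now right].
Qed.

Record blocking := Blocking {
  block_size : nat;
  radius : nat;
  center : G -> G;
  block : G -> list G;
  center_idem : forall g, center (center g) = center g;
  center_one : center one = one;
  block_NoDup : forall g, NoDup (block g);
  block_length : forall g, length (block g) = block_size;
  in_block : forall g h, In h (block g) <-> center h = center g;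
  center_near : forall g, in_ball radius (inv (center g) ** g)
}.

Definition coarser (L L' : blocking) : Prop :=
  forall g h, center L g = center L h -> center L' g = center L' h.

Section PolytilingOfBlocking.
Variable L : blocking.

(* The block of a center [c] is the translate [c T] of its shape [T]. *)
Definition shape (c : G) : list G :=
  filter (fun x => asbool (center L (c ** x) = c)) (ball (radius L)).

Definition shape_centers (T : list G) : G -> Prop :=
  fun d => center L d = d /\ d <> one /\ shape d = T.

Definition shapes : list (list G) :=
  nodup (fun a b => excluded_middle_informative (a = b))
    (filter (fun T => asbool (exists d, shape_centers T d)) (sublists (ball (radius L)))).

(* The tile of [one] comes first, as [centered] requires; the other tiles are grouped by shape. *)
Definition polytiling_of : list (tile G) :=
  ((fun d => d = one), shape one) :: map (fun T => (shape_centers T, T)) shapes.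

Lemma in_shape c x : In x (shape c) <-> in_ball (radius L) x /\ center L (c ** x) = c.
Proof. unfold shape. rewrite filter_In, asboolT, in_ball_list. tauto. Qed.

Lemma shape_NoDup c : NoDup (shape c).
Proof. apply NoDup_filter, NoDup_nodup. Qed.

Lemma shape_length c : center L c = c -> length (shape c) = block_size L.
Proof.
  intros Hc. rewrite <- (block_length L c), <- (length_map (gmul G c)).
  assert (Hnd : NoDup (map (gmul G c) (shape c))).
  { apply NoDup_map_NoDup_ForallPairs; [|apply shape_NoDup].
    intros a b _ _ E. now rewrite <- (mulKl c a), E, mulKl. }
  apply Nat.le_antisymm; apply NoDup_incl_length; auto using block_NoDup.
  - intros y Hy. apply in_map_iff in Hy as [x [<- Hx]]. apply in_shape in Hx as [_ Hx].
    apply in_block. congruence.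
  - intros h Hh. apply in_block in Hh. rewrite Hc in Hh. apply in_map_iff.
    exists (inv c ** h). split; [apply mulKr|]. apply in_shape. rewrite mulKr.
    split; [|exact Hh]. pose proof (center_near L h) as B. now rewrite Hh in B.
Qed.

Lemma one_in_shape c : center L c = c -> In one (shape c).
Proof. intros H. apply in_shape. rewrite gmul1r. split; [apply in_ball_one|exact H]. Qed.

Lemma in_translate_center g : in_translate G (center L g) (shape (center L g)) g.
Proof.
  exists (inv (center L g) ** g). rewrite mulKr. split; [|reflexivity].
  apply in_shape. rewrite mulKr. split; [apply center_near|reflexivity].
Qed.

Lemma center_of_translate d g : in_translate G d (shape d) g -> center L g = d.
Proof. intros [x [Hx ->]]. now apply in_shape in Hx. Qed.

Lemma in_shapes T :
  In T shapes <-> In T (sublists (ball (radius L))) /\ exists d, shape_centers T d.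
Proof. unfold shapes. rewrite nodup_In, filter_In, asboolT. tauto. Qed.

Lemma shape_in_shapes c : center L c = c -> c <> one -> In (shape c) shapes.
Proof. intros H1 H2. apply in_shapes. split; [apply filter_in_sublists|]. now exists c. Qed.

Lemma polytiling_of_entry i D T d : nth_error polytiling_of i = Some (D, T) -> D d ->
  center L d = d /\ T = shape d /\
  ((i = 0 /\ d = one) \/ exists j, i = S j /\ nth_error shapes j = Some T /\ d <> one).
Proof.
  intros H Hd. destruct i as [|j]; simpl in H.
  - injection H as <- <-. subst d. repeat split; auto using center_one.
  - rewrite nth_error_map in H. destruct (nth_error shapes j) as [T0|] eqn:E; [|discriminate].
    injection H as <- <-. destruct Hd as [A [B C]]. repeat split; eauto.
Qed.

Lemma polytiling_of_entry_nonempty i D T : nth_error polytiling_of i = Some (D, T) -> exists d, D d.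
Proof.
  intros H. destruct i as [|j]; simpl in H.
  - injection H as <- <-. now exists one.
  - rewrite nth_error_map in H. destruct (nth_error shapes j) as [T0|] eqn:E; [|discriminate].
    injection H as <- <-. apply nth_error_In, in_shapes in E. tauto.
Qed.

Lemma polytiling_of_tile_index g : exists i D,
  nth_error polytiling_of i = Some (D, shape (center L g)) /\ D (center L g).
Proof.
  set (c := center L g). assert (Hc : center L c = c) by apply center_idem.
  destruct (eqG c one) as [E|E].
  - exists 0, (fun d => d = one). rewrite E. now split.
  - destruct (In_nth_error _ _ (shape_in_shapes c Hc E)) as [j Hj].
    exists (S j), (shape_centers (shape c)). simpl. rewrite nth_error_map, Hj.
    repeat split; auto.
Qed.

Lemma polytiling_of_is_polytiling : is_polytiling polytiling_of.
Proof.
  split; [discriminate|split].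
  - intros i D T H. destruct (polytiling_of_entry_nonempty i D T H) as [d Hd].
    destruct (polytiling_of_entry i D T d H Hd) as [Hc [-> _]].
    repeat split; eauto using shape_NoDup, one_in_shape.
  - intros g. destruct (polytiling_of_tile_index g) as [i [D [Hi HD]]].
    exists (i, center L g). split;
      [exists D, (shape (center L g)); simpl; repeat split; auto using in_translate_center|].
    intros [i' d] [D' [T [Hi' [Hd Ht]]]]; simpl in *.
    destruct (polytiling_of_entry i' D' T d Hi' Hd) as [_ [-> Hidx]].
    apply center_of_translate in Ht. subst d.
    destruct (polytiling_of_entry i D _ _ Hi HD) as [_ [_ Hidx0]].
    f_equal. destruct Hidx as [[-> E]|[j' [-> [Hj' Hn]]]];
      destruct Hidx0 as [[-> E0]|[j [-> [Hj Hn0]]]]; try congruence.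
    f_equal. apply (proj1 (NoDup_nth_error shapes) (NoDup_nodup _ _));
      [apply nth_error_Some; congruence|congruence].
Qed.

Lemma polytiling_of_fair : fair polytiling_of.
Proof.
  intros i j D T D' T' H H'.
  destruct (polytiling_of_entry_nonempty i D T H) as [d Hd].
  destruct (polytiling_of_entry_nonempty j D' T' H') as [d' Hd'].
  destruct (polytiling_of_entry i D T d H Hd) as [A [-> _]].
  destruct (polytiling_of_entry j D' T' d' H' Hd') as [A' [-> _]].
  now rewrite !shape_length.
Qed.

End PolytilingOfBlocking.

Lemma polytiling_of_finer L L' : coarser L L' -> finer (polytiling_of L) (polytiling_of L').
Proof.
  intros Hc i D T d H Hd. destruct (polytiling_of_entry L i D T d H Hd) as [Hdc [-> _]].
  destruct (polytiling_of_tile_index L' d) as [j [D' [Hj HD']]].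
  exists j, D', (shape L' (center L' d)), (center L' d). repeat split; auto.
  intros g Hg. apply center_of_translate in Hg.
  rewrite (Hc d g) by congruence. apply in_translate_center.
Qed.

Theorem poly_ccc_of_blockings (seq : nat -> blocking) :
  (forall n, coarser (seq n) (seq (S n))) -> (forall n, radius (seq n) <= radius (seq (S n))) ->
  (forall g, exists n, center (seq n) g = one) -> poly_ccc G.
Proof.
  intros Hcoarse Hrad Habs. exists (fun n => polytiling_of (seq n)).
  split; [|split; [|split; [split|]]].
  - split; [apply polytiling_of_is_polytiling|apply polytiling_of_fair].
  - intros n. reflexivity.
  - intros n x Hx. simpl in *. apply in_shape in Hx as [A B]. apply in_shape.
    rewrite gmul1l in *. split; [eapply in_ball_mono; eauto|].
    rewrite <- (center_one (seq (S n))). apply Hcoarse. now rewrite B, center_one.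
  - intros g. destruct (Habs g) as [n Hn]. exists n. simpl.
    destruct (in_translate_center (seq n) g) as [x [Hx E]]. rewrite Hn in Hx, E.
    now rewrite gmul1l in E; subst.
  - intros n. apply polytiling_of_finer, Hcoarse.
Qed.

Hypothesis Sg_generates : forall g, exists l, incl l Sg /\ word_prod l = g.

Lemma in_ball_exists g : exists r, in_ball r g.
Proof. destruct (Sg_generates g) as [l [A B]]. now exists (length l), l. Qed.

Lemma coarser_refl L : coarser L L.
Proof. now intros g h. Qed.

Lemma coarser_trans L1 L2 L3 : coarser L1 L2 -> coarser L2 L3 -> coarser L1 L3.
Proof. intros H12 H23 g h E. auto. Qed.

Section MergeStep.
Hypothesis G_infinite : forall l : list G, exists g, ~ In g l.
Variable L : blocking.
Variable t : G.
Hypothesis t_center : center L t = t.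
Hypothesis t_neq1 : t <> one.
Variable dt : nat.
Hypothesis t_in_ball : in_ball dt t.

(* The block adjacency graph on centers, with the block of [t] contracted into that of [one]. *)
Definition adjacent_centers (c : G) : list G :=
  map (center L) (flat_map (fun z => map (fun s => z ** s) Sg) (block L c)).

Definition contract (y : G) : G := if eqG y t then one else y.

Definition contracted_nb (x : G) : list G :=
  map contract (adjacent_centers x ++ (if eqG x one then adjacent_centers t else [])).

Let creach := reach _ contracted_nb one.

Lemma adjacent_centers_center c y : In y (adjacent_centers c) -> center L y = y.
Proof. intros H. apply in_map_iff in H as [z [<- _]]. apply center_idem. Qed.

Lemma adjacent_centers_step x s : In s Sg -> In (center L (x ** s)) (adjacent_centers (center L x)).
Proof.
  intros Hs. apply in_map, in_flat_map. exists x. split; [|now apply in_map].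
  apply in_block. now rewrite center_idem.
Qed.

Lemma creach_center v : creach v -> center L v = v /\ v <> t.
Proof.
  intros [n Hn]. revert v Hn. induction n as [|n IH]; intros v Hn; simpl in Hn.
  - subst. split; [apply center_one|now apply not_eq_sym].
  - destruct Hn as [Hn|[x [_ Hx]]]; auto.
    apply in_map_iff in Hx as [y [<- Hy]].
    assert (Hy' : center L y = y).
    { apply in_app_or in Hy as [Hy|Hy]; [eauto using adjacent_centers_center|].
      destruct (eqG x one); [eauto using adjacent_centers_center|destruct Hy]. }
    unfold contract. destruct (eqG y t); [split; [apply center_one|now apply not_eq_sym]|auto].
Qed.

Lemma creach_contract_center g : creach (contract (center L g)).
Proof.
  destruct (Sg_generates g) as [l [Hl <-]]. induction l as [|s l IH] using rev_ind.
  - simpl. rewrite center_one. unfold contract.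
    destruct (eqG one t); [congruence|apply reach_root].
  - rewrite word_prod_app. simpl. rewrite gmul1r.
    assert (Hs : In s Sg) by (apply Hl, in_or_app; now right; left).
    assert (IH' : creach (contract (center L (word_prod l))))
      by (apply IH; intros x Hx; apply Hl, in_or_app; now left).
    pose proof (adjacent_centers_step (word_prod l) s Hs) as Hn.
    destruct (eqG (center L (word_prod l)) t) as [E|E].
    + replace (contract (center L (word_prod l))) with one in IH'
        by (unfold contract; now destruct (eqG _ t)).
      refine (proj1 (reach_nb _ _ _ _ _ IH' _)).
      apply in_map, in_or_app. right. destruct (eqG one one); [|congruence]. now rewrite <- E.
    + replace (contract (center L (word_prod l))) with (center L (word_prod l)) in IH'
        by (unfold contract; now destruct (eqG _ t)).
      refine (proj1 (reach_nb _ _ _ _ _ IH' _)).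
      apply in_map, in_or_app. now left.
Qed.

Lemma creach_of_center c : center L c = c -> c <> t -> creach c.
Proof.
  intros H1 H2. pose proof (creach_contract_center c) as H. rewrite H1 in H. unfold contract in H.
  now destruct (eqG c t).
Qed.

Lemma creach_infinite Lst : exists v, creach v /\ ~ In v Lst.
Proof.
  destruct (G_infinite (flat_map (block L) (t :: Lst))) as [g Hg].
  exists (center L g). split.
  - apply creach_of_center; [apply center_idem|]. intro E. apply Hg, in_flat_map.
    exists t. split; [now left|]. apply in_block. congruence.
  - intro H. apply Hg, in_flat_map. exists (center L g). split; [now right|].
    apply in_block. now rewrite center_idem.
Qed.

Let step_bound := radius L + 1 + radius L.

Lemma adjacent_centers_near c y : center L c = c -> In y (adjacent_centers c) ->
  in_ball step_bound (inv c ** y).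
Proof.
  intros Hc H. apply in_map_iff in H as [zs [<- Hz]]. apply in_flat_map in Hz as [z [Hz Hs]].
  apply in_map_iff in Hs as [s [<- Hs]].
  apply in_block in Hz. rewrite Hc in Hz.
  replace (inv c ** center L (z ** s))
    with ((inv (center L z) ** z) ** s ** inv (inv (center L (z ** s)) ** (z ** s)))
    by (rewrite Hz, invM, invK, invM, <- !gmulA, !mulKr; reflexivity).
  apply in_ball_mul; [apply in_ball_mul|]; auto using center_near, in_ball_gen, in_ball_inv.
Qed.

Lemma contracted_nb_near x y : creach x -> In y (contracted_nb x) ->
  in_ball (step_bound + dt) (inv x ** y).
Proof.
  intros Hx Hy. destruct (creach_center x Hx) as [Cx _].
  apply in_map_iff in Hy as [y0 [<- Hy0]]. unfold contract.
  apply in_app_or in Hy0 as [Hy0|Hy0].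
  - pose proof (adjacent_centers_near x y0 Cx Hy0) as HB. destruct (eqG y0 t) as [->|].
    + replace (inv x ** one) with ((inv x ** t) ** inv t)
        by (rewrite <- gmulA, gmulVr; reflexivity).
      apply in_ball_mul; auto using in_ball_inv.
    + eapply in_ball_mono; [|exact HB]. lia.
  - destruct (eqG x one) as [->|]; [|destruct Hy0].
    pose proof (adjacent_centers_near t y0 t_center Hy0) as HB. rewrite inv1, gmul1l.
    destruct (eqG y0 t); [apply in_ball_one|].
    replace y0 with (t ** (inv t ** y0)) by apply mulKr.
    rewrite Nat.add_comm. now apply in_ball_mul.
Qed.

Lemma contracted_nb_near_refl h v : creach h -> v = h \/ In v (contracted_nb h) ->
  in_ball (step_bound + dt) (inv h ** v).
Proof.
  intros H [->|E]; [rewrite gmulVl; apply in_ball_one|now apply contracted_nb_near].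
Qed.

Let mate_bound := 2 * (step_bound + dt) + dt.

Definition mate (c : G) : G :=
  if eqG c one then t else if eqG c t then one else pairing _ contracted_nb one c.

Lemma mate_one : mate one = t.
Proof. unfold mate. now destruct (eqG one one). Qed.

Lemma mate_t : mate t = one.
Proof. unfold mate. destruct (eqG t one); [contradiction|]. now destruct (eqG t t). Qed.

Lemma mate_other c : c <> one -> c <> t -> mate c = pairing _ contracted_nb one c.
Proof.
  intros H1 H2. unfold mate. destruct (eqG c one); [contradiction|]. now destruct (eqG c t).
Qed.

Lemma mate_spec c : center L c = c ->
  center L (mate c) = mate c /\ mate c <> c /\ mate (mate c) = c /\
  in_ball mate_bound (inv c ** mate c).
Proof.
  intros Hc. destruct (eqG c one) as [->|E1]; [|destruct (eqG c t) as [->|E2]].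
  - rewrite mate_one, mate_t. repeat split; auto.
    rewrite inv1, gmul1l. eapply in_ball_mono; [|exact t_in_ball]. lia.
  - rewrite mate_t, mate_one. repeat split; auto using center_one. rewrite gmul1r.
    eapply in_ball_mono; [|apply in_ball_inv; exact t_in_ball]. lia.
  - destruct (pairing_spec _ contracted_nb one creach_infinite c (creach_of_center c Hc E2) E1)
      as [Hp [Hp1 [Hpc [Hpp [h [Hh [Hv Hph]]]]]]].
    destruct (creach_center _ Hp) as [Cp Tp].
    rewrite (mate_other c E1 E2), (mate_other _ Hp1 Tp). repeat split; auto.
    set (p := pairing _ contracted_nb one) in *.
    replace (inv c ** p c) with (inv (inv h ** c) ** (inv h ** p c))
      by (rewrite invM, invK, <- gmulA, mulKr; reflexivity).
    eapply in_ball_mono; [|apply in_ball_mul; [apply in_ball_inv|];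
                          apply contracted_nb_near_refl; eauto]. lia.
Qed.

(* The center of the merged block of [c] and [mate c]. *)
Definition represents (c x : G) : Prop :=
  (x = c \/ x = mate c) /\ (c = one \/ mate c = one -> x = one).

Definition representative (c : G) : G := epsilon (inhabits one) (represents c).

Lemma representative_spec c : represents c (representative c).
Proof.
  unfold representative. apply epsilon_spec. destruct (classic (c = one \/ mate c = one)) as [H|H].
  - exists one. split; [|auto]. destruct H as [-> | ->]; auto.
  - exists c. split; [now left|tauto].
Qed.

Lemma representative_mate c : center L c = c -> representative (mate c) = representative c.
Proof.
  intros Hc. destruct (mate_spec c Hc) as [_ [_ [Hmm _]]]. unfold representative. f_equal.
  apply functional_extensionality. intros x. apply propositional_extensionality.
  unfold represents. rewrite Hmm. tauto.
Qed.

Lemma representative_center c : center L c = c -> center L (representative c) = representative c.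
Proof.
  intros Hc. destruct (representative_spec c) as [[->| ->] _]; [exact Hc|apply mate_spec, Hc].
Qed.

Lemma representative_eq a b : center L a = a -> center L b = b ->
  (representative a = representative b <-> b = a \/ b = mate a).
Proof.
  intros Ha Hb. destruct (mate_spec a Ha) as [Hma [_ [Hmma _]]].
  destruct (mate_spec b Hb) as [_ [_ [Hmmb _]]]. split.
  - intros E.
    destruct (representative_spec a) as [[Ra|Ra] _], (representative_spec b) as [[Rb|Rb] _];
      rewrite Ra, Rb in E; [left|right|right|left]; congruence.
  - intros [->| ->]; [reflexivity|symmetry; now apply representative_mate].
Qed.

Lemma representative_idem c :
  center L c = c -> representative (representative c) = representative c.
Proof.
  intros Hc. apply representative_eq; [apply representative_center, Hc|exact Hc|].
  destruct (representative_spec c) as [[->| ->] _]; [now left|right].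
  symmetry. apply mate_spec, Hc.
Qed.

Definition merged_center (g : G) : G := representative (center L g).

Definition merged_block (g : G) : list G :=
  block L (merged_center g) ++ block L (mate (merged_center g)).

Lemma merged_center_center g : center L (merged_center g) = merged_center g.
Proof. apply representative_center, center_idem. Qed.

Lemma merged_center_idem g : merged_center (merged_center g) = merged_center g.
Proof.
  unfold merged_center at 1. rewrite merged_center_center. apply representative_idem, center_idem.
Qed.

Lemma merged_center_one : merged_center one = one.
Proof. unfold merged_center. rewrite center_one. apply representative_spec. now left. Qed.

Lemma merged_block_NoDup g : NoDup (merged_block g).
Proof.
  apply NoDup_app; try apply block_NoDup. intros x H1 H2. apply in_block in H1, H2.
  destruct (mate_spec _ (merged_center_center g)) as [Hm [Hne _]].
  apply Hne. rewrite <- Hm, <- H2, H1. apply merged_center_center.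
Qed.

Lemma merged_block_length g : length (merged_block g) = 2 * block_size L.
Proof. unfold merged_block. rewrite length_app, !block_length. lia. Qed.

Lemma in_merged_block g h : In h (merged_block g) <-> merged_center h = merged_center g.
Proof.
  pose proof (merged_center_center g) as Hc. destruct (mate_spec _ Hc) as [Hm _].
  unfold merged_block. rewrite in_app_iff, !in_block, Hc, Hm.
  rewrite <- (representative_eq _ _ Hc (center_idem L h)).
  assert (Hrep : representative (merged_center g) = merged_center g)
    by (rewrite <- Hc at 1; apply merged_center_idem).
  rewrite Hrep. change (representative (center L h)) with (merged_center h).
  split; intros E; symmetry; exact E.
Qed.

Lemma merged_center_near g : in_ball (mate_bound + radius L) (inv (merged_center g) ** g).
Proof.
  replace (inv (merged_center g) ** g)
    with ((inv (merged_center g) ** center L g) ** (inv (center L g) ** g))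
    by (rewrite <- gmulA, mulKr; reflexivity).
  apply in_ball_mul; [|apply center_near].
  unfold merged_center. pose proof (center_idem L g) as Hc.
  destruct (representative_spec (center L g)) as [[->| ->] _];
    [rewrite gmulVl; apply in_ball_one|].
  replace (inv (mate (center L g)) ** center L g) with (inv (inv (center L g) ** mate (center L g)))
    by (rewrite invM, invK; reflexivity).
  apply in_ball_inv, mate_spec, Hc.
Qed.

Definition merged_blocking : blocking :=
  Blocking (2 * block_size L) (mate_bound + radius L) merged_center merged_block
    merged_center_idem merged_center_one merged_block_NoDup merged_block_length
    in_merged_block merged_center_near.

Lemma merged_blocking_spec :
  coarser L merged_blocking /\ radius L <= radius merged_blocking /\ center merged_blocking t = one.
Proof.
  split; [|split].
  - intros g h E. simpl. unfold merged_center. now rewrite E.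
  - simpl. lia.
  - simpl. unfold merged_center. rewrite t_center. apply representative_spec. right. apply mate_t.
Qed.

End MergeStep.

Section InfiniteGroup.
Hypothesis G_infinite : forall l : list G, exists g, ~ In g l.

Lemma blocking_absorb L t : center L t = t -> t <> one ->
  exists L', coarser L L' /\ radius L <= radius L' /\ center L' t = one.
Proof.
  intros Ht Ht1. destruct (in_ball_exists t) as [dt Hdt].
  exists (merged_blocking G_infinite L t Ht Ht1 dt Hdt). apply merged_blocking_spec.
Qed.

Lemma blocking_absorb_list L l :
  exists L', coarser L L' /\ radius L <= radius L' /\ forall g, In g l -> center L' g = one.
Proof.
  induction l as [|a l [L1 [Hc1 [Hr1 Hl1]]]].
  - exists L. split; [apply coarser_refl|split; [lia|intros g []]].
  - destruct (eqG (center L1 a) one) as [Ea|Ea].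
    + exists L1. repeat split; auto. intros g [<-|Hg]; auto.
    + destruct (blocking_absorb L1 (center L1 a) (center_idem L1 a) Ea) as [L2 [Hc2 [Hr2 Ha2]]].
      exists L2. split; [eapply coarser_trans; eauto|split; [lia|]].
      intros g [<-|Hg].
      * rewrite <- Ha2. apply Hc2. symmetry. apply center_idem.
      * rewrite <- (center_one L2). apply Hc2. rewrite center_one. auto.
Qed.

Lemma singleton_NoDup (g : G) : NoDup [g].
Proof. repeat constructor. intros []. Qed.

Lemma in_singleton_block (g h : G) : In h [g] <-> h = g.
Proof. simpl. split; [intros [<-|[]]; reflexivity|now left]. Qed.

Lemma discrete_center_near (g : G) : in_ball 0 (inv g ** g).
Proof. rewrite gmulVl. apply in_ball_one. Qed.

Definition discrete_blocking : blocking :=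
  Blocking 1 0 (fun g => g) (fun g => [g]) (fun g => eq_refl) eq_refl singleton_NoDup
    (fun g => eq_refl) in_singleton_block discrete_center_near.

Fixpoint absorbing_blockings (n : nat) : blocking :=
  match n with
  | 0 => discrete_blocking
  | S m => proj1_sig (constructive_indefinite_description _
             (blocking_absorb_list (absorbing_blockings m) (ball m)))
  end.

Lemma absorbing_blockings_step n :
  coarser (absorbing_blockings n) (absorbing_blockings (S n)) /\
  radius (absorbing_blockings n) <= radius (absorbing_blockings (S n)) /\
  forall g, In g (ball n) -> center (absorbing_blockings (S n)) g = one.
Proof. simpl. destruct constructive_indefinite_description as [L' H]. exact H. Qed.

Theorem poly_ccc_infinite : poly_ccc G.
Proof.
  apply (poly_ccc_of_blockings absorbing_blockings); try apply absorbing_blockings_step.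
  intros g. destruct (in_ball_exists g) as [r Hr]. exists (S r).
  apply absorbing_blockings_step, in_ball_list, Hr.
Qed.

End InfiniteGroup.

Lemma in_ball_list_bound (l : list G) : exists R, forall g, In g l -> in_ball R g.
Proof.
  induction l as [|a l [R IH]]; [exists 0; intros g []|].
  destruct (in_ball_exists a) as [r Hr]. exists (r + R). intros g [<-|H].
  - eapply in_ball_mono; [|exact Hr]. lia.
  - eapply in_ball_mono; [|apply IH, H]. lia.
Qed.

Section FiniteGroup.
Variable elements : list G.
Hypothesis in_elements : forall g, In g elements.

Theorem poly_ccc_finite : poly_ccc G.
Proof.
  destruct (in_ball_list_bound elements) as [R HR].
  set (all := nodup eqG elements).
  assert (Hall : forall g h : G, In h all <-> one = one)
    by (intros; unfold all; rewrite nodup_In; split; auto).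
  assert (Hnear : forall g : G, in_ball R (inv one ** g)) by (intros g; rewrite inv1, gmul1l; auto).
  set (whole := Blocking (length all) R (fun _ => one) (fun _ => all) (fun _ => eq_refl) eq_refl
                  (fun _ => NoDup_nodup eqG elements) (fun _ => eq_refl) Hall Hnear).
  apply (poly_ccc_of_blockings (fun _ => whole)); [now intros n g h|auto|now exists 0].
Qed.

End FiniteGroup.

End Blockings.

Lemma finitely_generated_symmetric (G : group) : finitely_generated G ->
  exists Sg : list G, (forall s, In s Sg -> In (ginv G s) Sg) /\
    forall g, exists l, incl l Sg /\ word_prod G l = g.
Proof.
  intros [S HS]. exists (S ++ map (ginv G) S). split.
  - intros s H. apply in_app_or in H as [H|H]; apply in_or_app; [right; now apply in_map|left].
    apply in_map_iff in H as [s0 [<- H]]. now rewrite invK.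
  - apply (HS (fun g => exists l, incl l (S ++ map (ginv G) S) /\ word_prod G l = g)).
    + now exists [].
    + intros s Hs. exists [s]. split; [intros x [<-|[]]; apply in_or_app; now left|apply gmul1r].
    + intros x y [l1 [A1 <-]] [l2 [A2 <-]]. exists (l1 ++ l2).
      split; [now apply incl_app|apply word_prod_app].
    + intros x [l [A <-]]. exists (rev (map (ginv G) l)). split; [|apply word_prod_rev_inv].
      intros z Hz. apply in_rev, in_map_iff in Hz as [s [<- Hs]].
      specialize (A s Hs).
      apply in_app_or in A as [A|A]; apply in_or_app; [right; now apply in_map|left].
      apply in_map_iff in A as [s0 [<- A]]. now rewrite invK.
Qed.

Theorem theorem6p1 (G : group) : finitely_generated G -> poly_ccc G.
Proof.
  intros HG. destruct (finitely_generated_symmetric G HG) as [Sg [Hsym Hgen]].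
  destruct (classic (exists elements : list G, forall g, In g elements)) as [[l Hl]|Hinf].
  - exact (poly_ccc_finite G Sg Hgen l Hl).
  - apply (poly_ccc_infinite G Sg Hsym Hgen). intros l.
    apply NNPP. intros Hno. apply Hinf. exists l. intros g. apply NNPP. eauto.
Qed.
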